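(* For any preorder $B$ on $\mathcal{SC}$ and all $\sigma_1,\sigma_2\in\mathcal{SC}$: $\sigma_1\preceq_B\sigma_2$ if and only if $\sigma_1\sqsubseteq_B\sigma_2$.
   Context: Fix base types $BT$ with preorder $\leq_{\mathsf b}$ and labels $\mathcal L$. Contract terms: $\sigma::=\mathbf 1\mid ?\mathtt t.\sigma\mid !\mathtt t.\sigma\mid !(\sigma).\sigma\mid ?(\sigma).\sigma\mid \sum_{i\in I}?l_i.\sigma_i\mid \bigoplus_{i\in I}!l_i.\sigma_i\mid \mu x.\sigma\mid x$ ($I$ finite nonempty, labels distinct). $\mathcal{SC}$ = closed guarded terms. $\mathrm{unfold}(\mu x.\sigma')=\mathrm{unfold}(\sigma'[\mu x.\sigma'/x])$, otherwise identity. LTS: $\mathbf 1\xrightarrow\checkmark$; $\lambda.\sigma\xrightarrow\lambda\sigma$ for prefixes (including $!l.\sigma$); $\bigoplus_{i\in I}!l_i.\sigma_i\xrightarrow\tau!l_i.\sigma_i$ for $|I|>1$; $\sum ?l_i.\sigma_i\xrightarrow{?l_i}\sigma_i$; $\mu x.\sigma\xrightarrow\tau\sigma[\mu x.\sigma/x]$. $\lambda_1\bowtie_B\lambda_2$ iff the pair is $(!l,?l)$, $(?l,!l)$, $(!\mathtt t_1,?\mathtt t_2)$ with $\mathtt t_1\leq_{\mathsf b}\mathtt t_2$, $(?\mathtt t_1,!\mathtt t_2)$ with $\mathtt t_2\leq_{\mathsf b}\mathtt t_1$, $(!(\sigma_1),?(\sigma_2))$ with $\sigma_1B\sigma_2$,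 $(?(\sigma_1),!(\sigma_2))$ with $\sigma_2B\sigma_1$. $\rho\|\sigma\xrightarrow\tau_B$ by a $\tau$ of either side or by synchronisation on $\lambda_1\bowtie_B\lambda_2$. $\dashv_B$: greatest $R$ with $\rho R\sigma$ implying (i) if $\rho\|\sigma$ has no $\xrightarrow\tau_B$ move then $\rho\xrightarrow\checkmark$, $\sigma\xrightarrow\checkmark$; (ii) every $\rho\|\sigma\xrightarrow\tau_B\rho'\|\sigma'$ has $\rho'R\sigma'$. $\sigma_1\sqsubseteq_B\sigma_2$ iff $\forall\rho\in\mathcal{SC}$, $\rho\dashv_B\sigma_1\Rightarrow\rho\dashv_B\sigma_2$. $\mathcal S(R,B)$: pairs $(\sigma_1,\sigma_2)$ such that, by the shape of $\mathrm{unfold}(\sigma_1)$: $\mathbf 1$ forces $\mathrm{unfold}(\sigma_2)=\mathbf 1$; $?\mathtt t_1.\sigma_1'$ forces $?\mathtt t_2.\sigma_2'$ with $\sigma_1'R\sigma_2'$, $\mathtt t_1\leq_{\mathsf b}\mathtt t_2$; $!\mathtt t_1.\sigma_1'$ forces $!\mathtt t_2.\sigma_2'$ with $\sigma_1'R\sigma_2'$, $\mathtt t_2\leq_{\mathsf b}\mathtt t_1$; $!(\sigma^m_1).\sigma_1'$ forces $!(\sigma^m_2).\sigma_2'$ with $\sigma_1'R\sigma_2'$, $\sigma^m_2B\sigma^m_1$; $?(\sigma^m_1).\sigma_1'$ forces $?(\sigma^m_2).\sigma_2'$ with $\sigma_1'R\sigma_2'$, $\sigma^m_1B\sigma^m_2$;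 $\sum_{i\in I}?l_i.\sigma^1_i$ forces $\sum_{j\in J}?l_j.\sigma^2_j$ with $I\subseteq J$, $\sigma^1_iR\sigma^2_i$; $\bigoplus_{i\in I}!l_i.\sigma^1_i$ forces $\bigoplus_{j\in J}!l_j.\sigma^2_j$ with $J\subseteq I$, $\sigma^1_jR\sigma^2_j$ (where the forced form is that of $\mathrm{unfold}(\sigma_2)$). $\preceq_B$ is the greatest $R$ with $R\subseteq\mathcal S(R,B)$. *)

From Stdlib Require Import List Arith RelationClasses.
Import ListNotations.

Set Implicit Arguments.

Section Contracts.

Variables (BT L : Type) (leb : BT -> BT -> Prop).

(* Contract terms; recursion variables are natural numbers.
   Sum = external choice of ?l_i.s_i, Choice = internal choice of !l_i.s_i. *)
Inductive term : Type :=
| One : term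
| InT : BT -> term -> term
| OutT : BT -> term -> term
| OutM : term -> term -> term
| InM : term -> term -> term
| Sum : list (L * term) -> term
| Choice : list (L * term) -> term
| Mu : nat -> term -> term
| Var : nat -> term.

(* substitution s[r/x] (capture-free when r is closed, as in all uses) *)
Fixpoint subst (x : nat) (r : term) (s : term) : term :=
  match s with
  | One => One
  | InT t s' => InT t (subst x r s')
  | OutT t s' => OutT t (subst x r s')
  | OutM m s' => OutM (subst x r m) (subst x r s')
  | InM m s' => InM (subst x r m) (subst x r s')
  | Sum br => Sum (map (fun p => (fst p, subst x r (snd p))) br)
  | Choice br => Choice (map (fun p => (fst p, subst x r (snd p))) br)
  | Mu y s' => if Nat.eqb x y then Mu y s' else Mu y (subst x r s')
  | Var y => if Nat.eqb x y then r else Var y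
  end.

Inductive occurs_free (x : nat) : term -> Prop :=
| of_var : occurs_free x (Var x)
| of_int t s : occurs_free x s -> occurs_free x (InT t s)
| of_outt t s : occurs_free x s -> occurs_free x (OutT t s)
| of_outm_m m s : occurs_free x m -> occurs_free x (OutM m s)
| of_outm_s m s : occurs_free x s -> occurs_free x (OutM m s)
| of_inm_m m s : occurs_free x m -> occurs_free x (InM m s)
| of_inm_s m s : occurs_free x s -> occurs_free x (InM m s)
| of_sum br l s : In (l, s) br -> occurs_free x s -> occurs_free x (Sum br)
| of_choice br l s : In (l, s) br -> occurs_free x s -> occurs_free x (Choice br)
| of_mu y s : y <> x -> occurs_free x s -> occurs_free x (Mu y s).

Definition closed (s : term) : Prop := forall x, ~ occurs_free x s.

Inductive unguarded (x : nat) : term -> Prop :=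
| ug_var : unguarded x (Var x)
| ug_mu y s : y <> x -> unguarded x s -> unguarded x (Mu y s).

Inductive guarded : term -> Prop :=
| g_one : guarded One
| g_var x : guarded (Var x)
| g_int t s : guarded s -> guarded (InT t s)
| g_outt t s : guarded s -> guarded (OutT t s)
| g_outm m s : guarded m -> guarded s -> guarded (OutM m s)
| g_inm m s : guarded m -> guarded s -> guarded (InM m s)
| g_sum br : (forall l s, In (l, s) br -> guarded s) -> guarded (Sum br)
| g_choice br : (forall l s, In (l, s) br -> guarded s) -> guarded (Choice br)
| g_mu x s : ~ unguarded x s -> guarded s -> guarded (Mu x s).

(* grammar side conditions: choices are finite, nonempty, with distinct labels *)
Inductive wf : term -> Prop :=
| wf_one : wf One
| wf_var x : wf (Var x)
| wf_int t s : wf s -> wf (InT t s)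
| wf_outt t s : wf s -> wf (OutT t s)
| wf_outm m s : wf m -> wf s -> wf (OutM m s)
| wf_inm m s : wf m -> wf s -> wf (InM m s)
| wf_sum br : br <> [] -> NoDup (map fst br) ->
    (forall l s, In (l, s) br -> wf s) -> wf (Sum br)
| wf_choice br : br <> [] -> NoDup (map fst br) ->
    (forall l s, In (l, s) br -> wf s) -> wf (Choice br)
| wf_mu x s : wf s -> wf (Mu x s).

Definition SC (s : term) : Prop := wf s /\ closed s /\ guarded s.

Definition preorder_on_SC (B : term -> term -> Prop) : Prop :=
  (forall s t, B s t -> SC s /\ SC t) /\
  (forall s, SC s -> B s s) /\
  (forall s t u, B s t -> B t u -> B s u).

Inductive act : Type :=
| Tick | Tau
| AInT : BT -> act | AOutT : BT -> act
| AOutM : term -> act | AInM : term -> act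
| AInL : L -> act | AOutL : L -> act.

(* LTS; the target of the tick transition of 1 is irrelevant (taken to be 1) *)
Inductive step : term -> act -> term -> Prop :=
| st_one : step One Tick One
| st_int t s : step (InT t s) (AInT t) s
| st_outt t s : step (OutT t s) (AOutT t) s
| st_outm m s : step (OutM m s) (AOutM m) s
| st_inm m s : step (InM m s) (AInM m) s
| st_outl l s : step (Choice [(l, s)]) (AOutL l) s
| st_choice br l s : 1 < length br -> In (l, s) br ->
    step (Choice br) Tau (Choice [(l, s)])
| st_sum br l s : In (l, s) br -> step (Sum br) (AInL l) s
| st_mu x s : step (Mu x s) Tau (subst x (Mu x s) s).

Definition compat (B : term -> term -> Prop) (a1 a2 : act) : Prop :=
  match a1, a2 with
  | AOutL l1, AInL l2 => l1 = l2
  | AInL l1, AOutL l2 => l1 = l2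
  | AOutT t1, AInT t2 => leb t1 t2
  | AInT t1, AOutT t2 => leb t2 t1
  | AOutM s1, AInM s2 => B s1 s2
  | AInM s1, AOutM s2 => B s2 s1
  | _, _ => False
  end.

Inductive sys_tau (B : term -> term -> Prop) :
  term -> term -> term -> term -> Prop :=
| sys_left r s r' : step r Tau r' -> sys_tau B r s r' s
| sys_right r s s' : step s Tau s' -> sys_tau B r s r s'
| sys_sync r s r' s' a1 a2 :
    step r a1 r' -> step s a2 s' -> compat B a1 a2 -> sys_tau B r s r' s'.

Definition compliance_postfix (B R : term -> term -> Prop) : Prop :=
  forall r s, R r s ->
    ((~ exists r' s', sys_tau B r s r' s') ->
       (exists r', step r Tick r') /\ (exists s', step s Tick s')) /\
    (forall r' s', sys_tau B r s r' s' -> R r' s').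

Definition compliant (B : term -> term -> Prop) (r s : term) : Prop :=
  exists R, compliance_postfix B R /\ R r s.

Definition subcontract (B : term -> term -> Prop) (s1 s2 : term) : Prop :=
  forall r, SC r -> compliant B r s1 -> compliant B r s2.

Definition is_mu (s : term) : bool :=
  match s with Mu _ _ => true | _ => false end.

(* graph of unfold *)
Inductive unfold : term -> term -> Prop :=
| uf_mu x s u : unfold (subst x (Mu x s) s) u -> unfold (Mu x s) u
| uf_other s : is_mu s = false -> unfold s s.

Definition S_fun (R B : term -> term -> Prop) (s1 s2 : term) : Prop :=
  exists u1, unfold s1 u1 /\
  match u1 with
  | One => unfold s2 One
  | InT t1 s1' => exists t2 s2',
      unfold s2 (InT t2 s2') /\ R s1' s2' /\ leb t1 t2
  | OutT t1 s1' => exists t2 s2',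
      unfold s2 (OutT t2 s2') /\ R s1' s2' /\ leb t2 t1
  | OutM m1 s1' => exists m2 s2',
      unfold s2 (OutM m2 s2') /\ R s1' s2' /\ B m2 m1
  | InM m1 s1' => exists m2 s2',
      unfold s2 (InM m2 s2') /\ R s1' s2' /\ B m1 m2
  | Sum br1 => exists br2, unfold s2 (Sum br2) /\
      forall l s, In (l, s) br1 -> exists s', In (l, s') br2 /\ R s s'
  | Choice br1 => exists br2, unfold s2 (Choice br2) /\
      (forall l s', In (l, s') br2 -> exists s, In (l, s) br1 /\ R s s')
  | _ => False
  end.

Definition syn_sub (B : term -> term -> Prop) (s1 s2 : term) : Prop :=
  exists R, (forall a b, R a b -> S_fun R B a b) /\ R s1 s2.

End Contracts.

(* Soundness: if [R] is included in [S_fun R B], a client of [s2] is related to [s2]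
   whenever it complies with some [s1] that [S_fun R B] relates to [s2].  Every move of
   the client against [s2] is mirrored by a move against [s1]: [S_fun] only lets [s2]
   refine message types (absorbed by transitivity of [leb] and [B]), offer more branches
   of an external choice and fewer of an internal one.  So this relation is a compliance
   relation.

   Completeness: the subcontract relation on [SC] is a post-fixpoint of [S_fun _ B].  The
   shape of the unfolding of [s2] is read off by testing it with clients of [s1] built
   from the dual contract, which complies with its original: a co-prefix in front of
   a client of the continuation, a one-branch internal choice, and, when [s1] is an
   internal choice, its dual external choice with one branch replaced by an arbitrary
   client of the continuation chosen by [s2]. *)

From Stdlib Require Import List RelationClasses Arith Lia Classical.
Import ListNotations.

Set Implicit Arguments.
Unset Strict Implicit.

Ltac inv H := inversion H; subst; clear H.

Notation map_snd f br := (map (fun p => (fst p, f (snd p))) br).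

Lemma in_map_snd_inv {A T : Type} (f : T -> T) (br : list (A * T)) l s :
  In (l, s) (map_snd f br) -> exists s0, In (l, s0) br /\ s = f s0.
Proof.
  intros H; apply in_map_iff in H as [[l0 s0] [E Hin]]; inv E; eauto.
Qed.

Lemma in_map_snd {A T : Type} (f : T -> T) (br : list (A * T)) l s :
  In (l, s) br -> In (l, f s) (map_snd f br).
Proof. intros H; apply in_map_iff; exists (l, s); auto. Qed.

Lemma map_fst_map_snd {A T : Type} (f : T -> T) (br : list (A * T)) :
  map fst (map_snd f br) = map fst br.
Proof. rewrite map_map; reflexivity. Qed.

Lemma NoDup_map_fst_In_eq {A T : Type} {br : list (A * T)} {l s s'} :
  NoDup (map fst br) -> In (l, s) br -> In (l, s') br -> s = s'.
Proof.
  induction br as [|[l0 s0] br IH]; simpl; [contradiction|].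
  intros N H1 H2; inversion N as [|? ? Hnotin N']; subst.
  destruct H1 as [E1|H1], H2 as [E2|H2]; try congruence.
  - inv E1. exfalso; apply Hnotin, (in_map fst _ _ H2).
  - inv E2. exfalso; apply Hnotin, (in_map fst _ _ H1).
  - eauto.
Qed.

(** * Contract syntax *)

Section Syntax.
Variables BT L : Type.
Notation term := (term BT L).
Implicit Types (r s t u m : term) (br : list (L * term)).

Lemma term_ind_branches (P : term -> Prop)
  (h1 : P (One _ _))
  (h2 : forall b t, P t -> P (InT b t))
  (h3 : forall b t, P t -> P (OutT b t))
  (h4 : forall m t, P m -> P t -> P (OutM m t))
  (h5 : forall m t, P m -> P t -> P (InM m t))
  (h6 : forall br, (forall l s, In (l, s) br -> P s) -> P (Sum br))
  (h7 : forall br, (forall l s, In (l, s) br -> P s) -> P (Choice br))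
  (h8 : forall x t, P t -> P (Mu x t))
  (h9 : forall x, P (Var _ _ x)) : forall t, P t.
Proof.
  fix IH 1.
  assert (Hbr : forall br l s, In (l, s) br -> P s).
  { intros br l s Hin; change s with (snd (l, s)); revert Hin; generalize (l, s).
    induction br as [|p0 br IHbr]; intros p Hin; [contradiction|].
    destruct Hin as [<-|Hin]; [apply IH | exact (IHbr p Hin)]. }
  intros []; [apply h1 | apply h2, IH | apply h3, IH | apply h4; apply IH
    | apply h5; apply IH | apply h6, Hbr | apply h7, Hbr | apply h8, IH | apply h9].
Qed.

Lemma unguarded_occurs_free x t : unguarded x t -> occurs_free x t.
Proof. induction 1; constructor; auto. Qed.

Section ClosedSubst.
Variables (x : nat) (r : term).
Hypothesis r_closed : closed r.

Lemma occurs_free_subst z s :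
  occurs_free z (subst x r s) -> occurs_free z s /\ z <> x.
Proof.
  induction s as [| | | | |br IH|br IH|y s IHs|y] using term_ind_branches;
    simpl; intros Hz; try (inv Hz; match goal with
      | H : occurs_free _ (subst _ _ ?t), IH' : occurs_free _ (subst _ _ ?t) -> _ |- _ =>
          destruct (IH' H); split; eauto using occurs_free end; fail).
  1-2: inversion Hz as [| | | | | | |? l ? Hin Hs|? l ? Hin Hs|]; subst;
    apply in_map_snd_inv in Hin as [s0 [Hin ->]];
    destruct (IH _ _ Hin Hs); split; eauto using occurs_free.
  - destruct (Nat.eqb_spec x y) as [->|Hne];
      inversion Hz as [| | | | | | | | |y' s' Hzy Hs]; subst.
    + split; [constructor|]; auto.
    + destruct (IHs Hs); split; auto; constructor; auto.
  - destruct (Nat.eqb_spec x y) as [->|Hne].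
    + exfalso; exact (r_closed Hz).
    + inv Hz; split; auto; constructor.
Qed.

Lemma unguarded_subst z s : unguarded z (subst x r s) -> unguarded z s.
Proof.
  induction s as [| | | | |br IH|br IH|y s IHs|y] using term_ind_branches;
    simpl; intros H; try solve [inv H].
  - destruct (Nat.eqb_spec x y); auto. inv H; constructor; auto.
  - destruct (Nat.eqb_spec x y); auto.
    exfalso; apply (r_closed (unguarded_occurs_free H)).
Qed.

Lemma wf_subst s : wf r -> wf s -> wf (subst x r s).
Proof.
  intros Wr; induction s as [| | | | |br IH|br IH|y s IHs|y] using term_ind_branches;
    simpl; intros W; inv W; try (constructor; auto; fail).
  1-2: constructor; [destruct br; simpl; congruence | rewrite map_fst_map_snd; auto |];
    intros l s Hin; apply in_map_snd_inv in Hin as [s0 [Hin ->]]; eauto.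
  - destruct (Nat.eqb x y); constructor; auto.
  - destruct (Nat.eqb x y); auto; constructor.
Qed.

Lemma guarded_subst s : guarded r -> guarded s -> guarded (subst x r s).
Proof.
  intros Gr; induction s as [| | | | |br IH|br IH|y s IHs|y] using term_ind_branches;
    simpl; intros G; inv G; try (constructor; auto; fail).
  1-2: constructor; intros l s Hin; apply in_map_snd_inv in Hin as [s0 [Hin ->]]; eauto.
  - destruct (Nat.eqb x y); constructor; auto.
    intro U; apply unguarded_subst in U; auto.
  - destruct (Nat.eqb x y); auto; constructor.
Qed.

End ClosedSubst.

Lemma SC_subst_mu x s : SC (Mu x s) -> SC (subst x (Mu x s) s).
Proof.
  intros (W & C & G). inv W; inv G.
  split; [|split].
  - apply wf_subst; auto; constructor; auto.
  - intros z Hz. apply occurs_free_subst in Hz as [Hz Hne]; auto.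
    apply (C z); constructor; auto.
  - apply guarded_subst; auto; constructor; auto.
Qed.

Lemma wf_Sum_inv br : wf (Sum br) ->
  br <> [] /\ NoDup (map fst br) /\ forall l s, In (l, s) br -> wf s.
Proof. intros W; inv W; auto. Qed.

Lemma wf_Choice_inv br : wf (Choice br) ->
  br <> [] /\ NoDup (map fst br) /\ forall l s, In (l, s) br -> wf s.
Proof. intros W; inv W; auto. Qed.

Lemma wf_Choice_single l s : wf s -> wf (Choice [(l, s)]).
Proof.
  intros W; constructor; [discriminate | repeat constructor; auto |].
  intros l' s' [E|[]]; inv E; auto.
Qed.

Lemma SC_Var x : ~ SC (Var BT L x).
Proof. intros (_ & C & _). apply (C x); constructor. Qed.

Lemma SC_One : SC (One BT L).
Proof. split; [constructor | split; [intros z Hz; inv Hz | constructor]]. Qed.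

Lemma SC_OutM_inv m s : SC (OutM m s) -> SC m /\ SC s.
Proof.
  intros (W & C & G); inv W; inv G.
  split; (split; [|split]); auto; intros z Hz; apply (C z); eauto using occurs_free.
Qed.

Lemma SC_InM_inv m s : SC (InM m s) -> SC m /\ SC s.
Proof.
  intros (W & C & G); inv W; inv G.
  split; (split; [|split]); auto; intros z Hz; apply (C z); eauto using occurs_free.
Qed.

Lemma SC_Sum_branch br l s : SC (Sum br) -> In (l, s) br -> SC s.
Proof.
  intros (W & C & G) Hin; inv W; inv G.
  split; [|split]; eauto; intros z Hz; apply (C z); eauto using occurs_free.
Qed.

Lemma SC_Choice_branch br l s : SC (Choice br) -> In (l, s) br -> SC s.
Proof.
  intros (W & C & G) Hin; inv W; inv G.
  split; [|split]; eauto; intros z Hz; apply (C z); eauto using occurs_free.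
Qed.

Lemma SC_Sum_intro br : br <> [] -> NoDup (map fst br) ->
  (forall l s, In (l, s) br -> SC s) -> SC (Sum br).
Proof.
  intros Hne N HS; split; [|split].
  - constructor; auto; intros l s Hin; apply (HS l s Hin).
  - intros z Hz; inversion Hz as [| | | | | | |? l s Hin Hs|? l s Hin Hs|]; subst.
    destruct (HS _ _ Hin) as (_ & C & _); exact (C z Hs).
  - constructor; intros l s Hin; apply (HS l s Hin).
Qed.

Lemma SC_Choice_intro br : br <> [] -> NoDup (map fst br) ->
  (forall l s, In (l, s) br -> SC s) -> SC (Choice br).
Proof.
  intros Hne N HS; split; [|split].
  - constructor; auto; intros l s Hin; apply (HS l s Hin).
  - intros z Hz; inversion Hz as [| | | | | | |? l s Hin Hs|? l s Hin Hs|]; subst.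
    destruct (HS _ _ Hin) as (_ & C & _); exact (C z Hs).
  - constructor; intros l s Hin; apply (HS l s Hin).
Qed.

Lemma SC_Choice_single l s : SC s -> SC (Choice [(l, s)]).
Proof.
  intros Hs; apply SC_Choice_intro; [discriminate | repeat constructor; auto |].
  intros l' s' [E|[]]; inv E; auto.
Qed.

Lemma SC_step s a s' : SC s -> step s a s' -> SC s'.
Proof.
  intros HS Hst; inv Hst.
  - exact HS.
  - destruct HS as (W & C & G); inv W; inv G.
    split; [|split]; auto; intros z Hz; apply (C z); constructor; auto.
  - destruct HS as (W & C & G); inv W; inv G.
    split; [|split]; auto; intros z Hz; apply (C z); constructor; auto.
  - apply (SC_OutM_inv HS).
  - apply (SC_InM_inv HS).
  - eapply SC_Choice_branch; [exact HS | left; reflexivity].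
  - apply SC_Choice_single; eapply SC_Choice_branch; eauto.
  - eapply SC_Sum_branch; eauto.
  - apply SC_subst_mu, HS.
Qed.

Lemma unfold_not_mu s u : unfold s u -> is_mu u = false.
Proof. induction 1; auto. Qed.

Lemma unfold_id s u : is_mu s = false -> unfold s u -> u = s.
Proof. intros Hs H; inv H; [discriminate | reflexivity]. Qed.

Lemma unfold_mu_inv x s u : unfold (Mu x s) u -> unfold (subst x (Mu x s) s) u.
Proof. intros H; inv H; [assumption | discriminate]. Qed.

Lemma unfold_SC s u : unfold s u -> SC s -> SC u.
Proof. induction 1; auto. intros; apply IHunfold, SC_subst_mu; auto. Qed.

Fixpoint mu_depth t : nat := match t with Mu _ s => S (mu_depth s) | _ => 0 end.
Fixpoint mu_body t : term := match t with Mu _ s => mu_body s | _ => t end.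
Definition is_var t : bool := match t with Var _ _ _ => true | _ => false end.

(* Substitution adds no leading binder unless the body under the leading binders is a
   variable, which guardedness excludes; this bounds the length of [unfold]. *)
Lemma mu_body_subst x r s : is_var (mu_body s) = false ->
  is_var (mu_body (subst x r s)) = false /\ mu_depth (subst x r s) = mu_depth s.
Proof.
  induction s; simpl; intros H; try discriminate; auto.
  destruct (Nat.eqb x n); simpl; auto. destruct (IHs H); auto.
Qed.

Lemma unfold_exists_depth n s :
  mu_depth s = n -> is_var (mu_body s) = false -> exists u, unfold s u.
Proof.
  revert s; induction n as [|n IHn]; intros s Hd Hv.
  - destruct s; try discriminate; eexists; apply uf_other; reflexivity.
  - destruct s as [| | | | | | |y s|]; try discriminate. simpl in Hd, Hv.
    destruct (mu_body_subst y (Mu y s) Hv) as [Hv' Hd'].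
    destruct (IHn (subst y (Mu y s) s)) as [u Hu]; [congruence | auto |].
    exists u; constructor; auto.
Qed.

Lemma guarded_mu_body_var s z : guarded s -> mu_body s = Var BT L z -> unguarded z s.
Proof.
  induction s; simpl; intros G E; try discriminate.
  - inv G. destruct (Nat.eq_dec n z) as [->|Hne]; [|constructor; auto].
    exfalso; auto.
  - inv E; constructor.
Qed.

Lemma unfold_exists s : SC s -> exists u, unfold s u.
Proof.
  intros (W & C & G). apply unfold_exists_depth with (n := mu_depth s); auto.
  destruct (mu_body s) eqn:E; auto.
  exfalso; apply (C n), unguarded_occurs_free, guarded_mu_body_var; auto.
Qed.

End Syntax.

(** * Compliance *)

Section Compliance.
Variables (BT L : Type) (leb : BT -> BT -> Prop) (B : term BT L -> term BT L -> Prop).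
Notation term := (term BT L).
Implicit Types (r s u : term) (br : list (L * term)).
Notation comp := (compliant leb B).
Notation st := (sys_tau leb B).

Definition postfix_at (R : term -> term -> Prop) r s : Prop :=
  ((~ exists r' s', st r s r' s') ->
     (exists r', step r (Tick _ _) r') /\ (exists s', step s (Tick _ _) s')) /\
  (forall r' s', st r s r' s' -> R r' s').

Definition stable u : Prop := forall u', ~ step u (Tau _ _) u'.

Lemma stuck_stable_l r s : ~ (exists r' s', st r s r' s') -> stable r.
Proof. intros Hn r' Hr; apply Hn; do 2 eexists; apply sys_left; eauto. Qed.

Lemma stuck_stable_r r s : ~ (exists r' s', st r s r' s') -> stable s.
Proof. intros Hn s' Hs; apply Hn; do 2 eexists; apply sys_right; eauto. Qed.

Lemma compliant_postfix_at r s : comp r s -> postfix_at comp r s.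
Proof.
  intros [R [HR Hrs]]; destruct (HR r s Hrs) as [Hstuck Hnext]; split; auto.
  intros r' s' H; exists R; auto.
Qed.

Lemma compliant_step r s r' s' : comp r s -> st r s r' s' -> comp r' s'.
Proof. intros H; apply (compliant_postfix_at H). Qed.

Lemma compliant_coind (R : term -> term -> Prop) :
  (forall r s, R r s -> postfix_at (fun a b => R a b \/ comp a b) r s) ->
  forall r s, R r s -> comp r s.
Proof.
  intros HR r s Hrs; exists (fun a b => R a b \/ comp a b); split; [|auto].
  intros a b [Hab|Hab]; [apply HR; auto|].
  destruct (compliant_postfix_at Hab) as [Hstuck Hnext]; split; auto.
Qed.

Lemma compat_tau a : ~ compat leb B a (Tau _ _).
Proof. destruct a; simpl; auto. Qed.

Lemma compat_tau_l a : ~ compat leb B (Tau _ _) a.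
Proof. destruct a; simpl; auto. Qed.

Lemma step_mu_inv x s a t : step (Mu x s) a t -> a = Tau _ _ /\ t = subst x (Mu x s) s.
Proof. intros H; inv H; auto. Qed.

Lemma compliant_mu_back r x s : comp r (subst x (Mu x s) s) -> comp r (Mu x s).
Proof.
  intros Hc; apply compliant_coind with
    (R := fun r t => t = Mu x s /\ comp r (subst x (Mu x s) s)); [|auto].
  clear r Hc; intros r t [-> Hc]; split.
  - intros Hn; exfalso; apply Hn; do 2 eexists; apply sys_right; constructor.
  - intros r' s' Hst; inversion Hst as [? ? ? Hx|? ? ? Hy|? ? ? ? a b Hx Hy Hab]; subst.
    + left; split; auto; eapply compliant_step; eauto; apply sys_left; auto.
    + apply step_mu_inv in Hy as [_ ->]; auto.
    + apply step_mu_inv in Hy as [-> _]; destruct (compat_tau Hab).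
Qed.

Lemma compliant_unfold r s u : unfold s u -> comp r s -> comp r u.
Proof.
  induction 1; auto. intros; apply IHunfold.
  eapply compliant_step; eauto; apply sys_right; constructor.
Qed.

Lemma compliant_unfold_back r s u : unfold s u -> comp r u -> comp r s.
Proof. induction 1; auto; intros; apply compliant_mu_back; auto. Qed.

Lemma compliant_choice_branch r br l s :
  comp r (Choice br) -> In (l, s) br -> comp r (Choice [(l, s)]).
Proof.
  intros Hc Hin. destruct (Nat.lt_ge_cases 1 (length br)).
  - eapply compliant_step; eauto. apply sys_right; constructor; auto.
  - destruct br as [|p [|q br]]; simpl in *; try lia; try contradiction.
    destruct Hin as [<-|[]]; auto.
Qed.

Lemma compliant_sync r s : comp r s -> stable r -> stable s ->
  (forall r', ~ step r (Tick _ _) r') \/ (forall s', ~ step s (Tick _ _) s') ->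
  exists a r' b s', step r a r' /\ step s b s' /\ compat leb B a b.
Proof.
  intros Hc Hr Hs Htick. apply NNPP; intros Hn.
  destruct (proj1 (compliant_postfix_at Hc)) as [[r' Hr'] [s' Hs']].
  - intros [r' [s' Hst]]; inv Hst; [eapply Hr | eapply Hs | apply Hn; do 4 eexists]; eauto.
  - destruct Htick as [Ht|Ht]; eapply Ht; eauto.
Qed.

Lemma step_tau_inv u u' : step u (Tau _ _) u' -> is_mu u = false ->
  exists br l s, u = Choice br /\ 1 < length br /\ In (l, s) br /\ u' = Choice [(l, s)].
Proof. intros H; inv H; [eauto 7 | discriminate]. Qed.

End Compliance.

Inductive prefix {BT L : Type} : term BT L -> act BT L -> term BT L -> Prop :=
| prefix_int t s : prefix (InT t s) (@AInT _ _ t) s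
| prefix_outt t s : prefix (OutT t s) (@AOutT _ _ t) s
| prefix_outm m s : prefix (OutM m s) (AOutM m) s
| prefix_inm m s : prefix (InM m s) (AInM m) s.

Definition co_act {BT L : Type} (a : act BT L) : act BT L :=
  match a with
  | @AInT _ _ t => @AOutT _ _ t
  | @AOutT _ _ t => @AInT _ _ t
  | AOutM m => AInM m
  | AInM m => AOutM m
  | _ => a
  end.

(* The prefix a client puts in front of its continuation to synchronise with a prefix
   of action [a]; only meaningful for the actions of [prefix]. *)
Definition co_prefix {BT L : Type} (a : act BT L) (r : term BT L) : term BT L :=
  match a with
  | @AInT _ _ t => OutT t r
  | @AOutT _ _ t => InT t r
  | AOutM m => InM m r
  | AInM m => OutM m r
  | _ => r
  end.

Section Prefix.
Variables (BT L : Type) (leb : BT -> BT -> Prop) (B : term BT L -> term BT L -> Prop).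
Notation term := (term BT L).
Implicit Types (r s u : term).
Notation comp := (compliant leb B).

Lemma prefix_step u a s : prefix u a s -> step u a s.
Proof. intros []; constructor. Qed.

Lemma prefix_step_inv u a s a' s' : prefix u a s -> step u a' s' -> a' = a /\ s' = s.
Proof. intros Hp Hs; inv Hp; inv Hs; auto. Qed.

Lemma wf_prefix u a s : wf u -> prefix u a s -> wf s.
Proof. intros W Hp; inv Hp; inv W; auto. Qed.

Lemma prefix_stable u a s : prefix u a s -> stable u.
Proof. intros Hp u' Hs; destruct (prefix_step_inv Hp Hs) as [Ha _]; subst; inv Hp. Qed.

Lemma prefix_no_tick u a s u' : prefix u a s -> ~ step u (Tick _ _) u'.
Proof. intros Hp Hs; destruct (prefix_step_inv Hp Hs) as [Ha _]; subst; inv Hp. Qed.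

Lemma compat_prefix_step r a r' s b s' :
  prefix s b s' -> compat leb B a b -> step r a r' -> prefix r a r'.
Proof.
  intros Hp Hc Hr; inv Hp; destruct a; simpl in Hc; try contradiction; inv Hr; constructor.
Qed.

Lemma compat_prefix_step_r r a r' s b s' :
  prefix r a r' -> compat leb B a b -> step s b s' -> prefix s b s'.
Proof.
  intros Hp Hc Hs; inv Hp; destruct b; simpl in Hc; try contradiction; inv Hs; constructor.
Qed.

Lemma compliant_prefix r a r' s b s' :
  prefix r a r' -> prefix s b s' -> compat leb B a b -> comp r' s' -> comp r s.
Proof.
  intros Hr Hs Hab Hc. apply compliant_coind with (R := fun x y => x = r /\ y = s); auto.
  intros x y [-> ->]; split.
  - intros Hn; exfalso; apply Hn; do 2 eexists; eapply sys_sync; eauto using prefix_step.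
  - intros x' y' Hst; right.
    inversion Hst as [? ? ? Hx|? ? ? Hy|? ? ? ? ? ? Hx Hy]; subst.
    + destruct (prefix_stable Hr Hx).
    + destruct (prefix_stable Hs Hy).
    + destruct (prefix_step_inv Hr Hx) as [-> ->], (prefix_step_inv Hs Hy) as [-> ->]; auto.
Qed.

Lemma compliant_prefix_inv r a r' s b s' :
  comp r s -> prefix r a r' -> prefix s b s' -> compat leb B a b /\ comp r' s'.
Proof.
  intros Hc Hr Hs.
  destruct (compliant_sync Hc) as (a0 & r0 & b0 & s0 & Hr0 & Hs0 & Hab);
    eauto using prefix_stable, prefix_no_tick.
  destruct (prefix_step_inv Hr Hr0) as [-> ->], (prefix_step_inv Hs Hs0) as [-> ->].
  split; auto. eapply compliant_step; eauto. eapply sys_sync; eauto using prefix_step.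
Qed.

Lemma prefix_co_prefix u a s r : prefix u a s -> prefix (co_prefix a r) (co_act a) r.
Proof. intros []; constructor. Qed.

Lemma SC_co_prefix u a s r : SC u -> prefix u a s -> SC r -> SC (co_prefix a r).
Proof.
  intros Hu Hp (W & C & G); inv Hp; simpl.
  - split; [constructor | split; [intros z Hz; inv Hz; eapply C |constructor]]; eauto.
  - split; [constructor | split; [intros z Hz; inv Hz; eapply C |constructor]]; eauto.
  - destruct (SC_OutM_inv Hu) as [(Wm & Cm & Gm) _].
    split; [constructor | split; [intros z Hz; inv Hz; [eapply Cm | eapply C] |constructor]]; eauto.
  - destruct (SC_InM_inv Hu) as [(Wm & Cm & Gm) _].
    split; [constructor | split; [intros z Hz; inv Hz; [eapply Cm | eapply C] |constructor]]; eauto.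
Qed.

Lemma compat_co_act u a s : Reflexive leb -> (forall m, SC m -> B m m) ->
  SC u -> prefix u a s -> compat leb B (co_act a) a.
Proof.
  intros Hleb HB Hu Hp; inv Hp; simpl; auto.
  - apply HB, (SC_OutM_inv Hu).
  - apply HB, (SC_InM_inv Hu).
Qed.

End Prefix.

Section Labels.
Variables (BT L : Type) (leb : BT -> BT -> Prop) (B : term BT L -> term BT L -> Prop).
Notation term := (term BT L).
Implicit Types (r s u : term) (br : list (L * term)).
Notation comp := (compliant leb B).

Lemma compat_AInL_inv a l : compat leb B a (AInL _ l) -> a = AOutL _ l.
Proof. destruct a; simpl; intros; subst; tauto. Qed.

Lemma compat_AOutL_inv a l : compat leb B a (AOutL _ l) -> a = AInL _ l.
Proof. destruct a; simpl; intros; subst; tauto. Qed.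

Lemma step_AInL_inv s l s' : step s (AInL _ l) s' -> exists br, s = Sum br /\ In (l, s') br.
Proof. intros H; inv H; eauto. Qed.

Lemma step_AOutL_inv r l r' : step r (AOutL _ l) r' -> r = Choice [(l, r')].
Proof. intros H; inv H; auto. Qed.

Lemma step_choice_single_inv l s a u : step (Choice [(l, s)]) a u -> a = AOutL _ l /\ u = s.
Proof. intros H; inv H; [auto | simpl in *; lia]. Qed.

Lemma stable_choice_single l s : stable (Choice [(l, s)]).
Proof. intros u H; apply step_choice_single_inv in H as [H _]; discriminate. Qed.

Lemma stable_sum br : stable (Sum br).
Proof. intros u H; inv H. Qed.

Lemma compliant_single_sum l r br :
  (exists s, In (l, s) br) -> (forall s, In (l, s) br -> comp r s) ->
  comp (Choice [(l, r)]) (Sum br).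
Proof.
  intros [s Hin] Hc.
  apply compliant_coind with (R := fun x y => x = Choice [(l, r)] /\ y = Sum br); auto.
  intros x y [-> ->]; split.
  - intros Hn; exfalso; apply Hn; do 2 eexists; eapply sys_sync;
      [constructor | constructor; eauto | reflexivity].
  - intros x' y' Hst; right; inversion Hst as [? ? ? Hx|? ? ? Hy|? ? ? ? a b Hx Hy Hab]; subst.
    + destruct (stable_choice_single Hx).
    + destruct (stable_sum Hy).
    + apply step_choice_single_inv in Hx as [-> ->].
      inversion Hy as [| | | | | | |? l' ? Hin'|]; subst; simpl in Hab; subst; auto.
Qed.

Lemma compliant_sum_single brc l s :
  (exists r, In (l, r) brc) -> (forall r, In (l, r) brc -> comp r s) ->
  comp (Sum brc) (Choice [(l, s)]).
Proof.
  intros [r Hin] Hc.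
  apply compliant_coind with (R := fun x y => x = Sum brc /\ y = Choice [(l, s)]); auto.
  intros x y [-> ->]; split.
  - intros Hn; exfalso; apply Hn; do 2 eexists; eapply sys_sync;
      [constructor; eauto | constructor | reflexivity].
  - intros x' y' Hst; right; inversion Hst as [? ? ? Hx|? ? ? Hy|? ? ? ? a b Hx Hy Hab]; subst.
    + destruct (stable_sum Hx).
    + destruct (stable_choice_single Hy).
    + apply step_choice_single_inv in Hy as [-> ->].
      inversion Hx as [| | | | | | |? l' ? Hin'|]; subst; simpl in Hab; subst; auto.
Qed.

Lemma compliant_sum_choice brc brs : brs <> [] ->
  (forall l s, In (l, s) brs -> exists r, In (l, r) brc) ->
  (forall l r s, In (l, r) brc -> In (l, s) brs -> comp r s) ->
  comp (Sum brc) (Choice brs).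
Proof.
  intros Hne Hex Hc.
  assert (Hsingle : forall l s, In (l, s) brs -> comp (Sum brc) (Choice [(l, s)]))
    by (intros l s Hin; apply compliant_sum_single; eauto).
  destruct brs as [|[l s] [|q brs]]; [congruence | apply Hsingle; left; auto |].
  apply compliant_coind
    with (R := fun x y => x = Sum brc /\ y = Choice ((l, s) :: q :: brs)); auto.
  intros x y [-> ->]; split.
  - intros Hn; exfalso; apply Hn; do 2 eexists; apply sys_right.
    apply st_choice with (l := l) (s := s); simpl; auto; lia.
  - intros x' y' Hst; right; inversion Hst as [? ? ? Hx|? ? ? Hy|? ? ? ? a b Hx Hy Hab]; subst.
    + destruct (stable_sum Hx).
    + destruct (step_tau_inv Hy eq_refl) as (br & l' & s' & E & _ & Hin & ->); inv E; auto.
    + inversion Hy; subst; destruct (compat_tau Hab).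
Qed.

End Labels.

(** * Soundness *)

Section Soundness.
Variables (BT L : Type) (leb : BT -> BT -> Prop) (B : term BT L -> term BT L -> Prop).
Hypothesis leb_trans : Transitive leb.
Hypothesis B_trans : forall a b c, B a b -> B b c -> B a c.
Notation term := (term BT L).
Notation comp := (compliant leb B).

Variable R : term -> term -> Prop.
Hypothesis R_S : forall s1 s2, R s1 s2 -> S_fun leb R B s1 s2.

Definition refines (a1 a2 : act BT L) : Prop :=
  forall a, compat leb B a a1 -> compat leb B a a2.

Definition sound_rel rho s2 : Prop :=
  exists s1, comp rho s1 /\ S_fun leb R B s1 s2 /\ wf s2.

Lemma sound_rel_intro rho s1 s2 : comp rho s1 -> R s1 s2 -> wf s2 -> sound_rel rho s2.
Proof. intros; exists s1; auto. Qed.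

Section Server.
Variables (rho u1 s2 : term).
Hypothesis rho_u1 : comp rho u1.
Hypothesis wf_s2 : wf s2.
Hypothesis left_tau : forall rho', step rho (Tau _ _) rho' -> sound_rel rho' s2.

Lemma sound_one : u1 = One _ _ -> s2 = One _ _ -> postfix_at leb B sound_rel rho s2.
Proof.
  intros -> ->; split.
  - apply (proj1 (compliant_postfix_at rho_u1)).
  - intros r' s' Hst; inversion Hst as [? ? ? Hx|? ? ? Hy|? ? ? ? ? ? Hx Hy Hxy]; subst; auto.
    + inv Hy.
    + inv Hy; destruct a1; contradiction.
Qed.

Lemma sound_prefix a1 s1' a2 s2' : prefix u1 a1 s1' -> prefix s2 a2 s2' ->
  refines a1 a2 -> R s1' s2' -> postfix_at leb B sound_rel rho s2.
Proof.
  intros Hu1 Hs2 Href HR; split.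
  - intros Hn; exfalso.
    destruct (compliant_sync rho_u1) as (a & r' & b & u' & Hr & Hu & Hab);
      eauto using stuck_stable_l, prefix_stable, prefix_no_tick.
    destruct (prefix_step_inv Hu1 Hu) as [-> ->].
    apply Hn; do 2 eexists; eapply sys_sync; eauto using prefix_step.
  - intros r' s' Hst; inversion Hst as [? ? ? Hx|? ? ? Hy|? ? ? ? a b Hx Hy Hab]; subst; auto.
    + destruct (prefix_stable Hs2 Hy).
    + destruct (prefix_step_inv Hs2 Hy) as [-> ->].
      pose proof (compat_prefix_step Hs2 Hab Hx) as Hrho.
      apply sound_rel_intro with s1'; eauto using wf_prefix.
      apply (compliant_prefix_inv rho_u1 Hrho Hu1).
Qed.

Lemma sound_sum br1 br2 : u1 = Sum br1 -> s2 = Sum br2 ->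
  (forall l s, In (l, s) br1 -> exists s', In (l, s') br2 /\ R s s') ->
  postfix_at leb B sound_rel rho s2.
Proof.
  intros -> -> Hbr; split.
  - intros Hn; exfalso.
    destruct (compliant_sync rho_u1) as (a & r' & b & u' & Hr & Hu & Hab);
      eauto using stuck_stable_l, stable_sum.
    { right; intros ? Hx; inv Hx. }
    inversion Hu as [| | | | | | |? l ? Hin|]; subst.
    destruct (Hbr _ _ Hin) as (s' & Hin' & _).
    apply Hn; do 2 eexists; eapply sys_sync; [exact Hr | constructor; eauto | exact Hab].
  - intros r' s' Hst; inversion Hst as [? ? ? Hx|? ? ? Hy|? ? ? ? a b Hx Hy Hab]; subst; auto.
    + destruct (stable_sum Hy).
    + inversion Hy as [| | | | | | |? l ? Hin|]; subst.
      apply compat_AInL_inv in Hab as ->; apply step_AOutL_inv in Hx as ->.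
      destruct (compliant_sync rho_u1) as (a & r0 & b & s0 & Hr & Hu & Hab);
        eauto using stable_choice_single, stable_sum.
      { right; intros ? Hx; inv Hx. }
      apply step_choice_single_inv in Hr as [-> ->].
      inversion Hu as [| | | | | | |? l0 ? Hin0|]; subst.
      apply compat_AInL_inv in Hab; inv Hab.
      destruct (Hbr _ _ Hin0) as (s'' & Hin'' & HR).
      destruct (wf_Sum_inv wf_s2) as (_ & Hnd & Hwf).
      rewrite (NoDup_map_fst_In_eq Hnd Hin Hin'').
      apply sound_rel_intro with s0; eauto.
      eapply compliant_step; [exact rho_u1 |].
      eapply sys_sync; [constructor | exact Hu | reflexivity].
Qed.

Lemma sound_choice br1 br2 : u1 = Choice br1 -> s2 = Choice br2 ->
  (forall l s', In (l, s') br2 -> exists s, In (l, s) br1 /\ R s s') ->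
  postfix_at leb B sound_rel rho s2.
Proof.
  intros -> -> Hbr.
  destruct (wf_Choice_inv wf_s2) as (Hne & Hnd & Hwf); split.
  - intros Hn; exfalso.
    destruct br2 as [|[l s'] [|q br2]]; [congruence | |].
    2: { apply Hn; do 2 eexists; apply sys_right.
         apply st_choice with (l := l) (s := s'); simpl; auto; lia. }
    destruct (Hbr l s' (or_introl eq_refl)) as (s & Hin & _).
    destruct (compliant_sync (compliant_choice_branch rho_u1 Hin))
      as (a & r' & b & u' & Hr & Hu & Hab);
      eauto using stuck_stable_l, stable_choice_single.
    { right; intros ? Hx; apply step_choice_single_inv in Hx as [Hx _]; discriminate. }
    apply step_choice_single_inv in Hu as [-> ->].
    apply Hn; do 2 eexists; eapply sys_sync; [exact Hr | constructor | exact Hab].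
  - intros r' s' Hst; inversion Hst as [? ? ? Hx|? ? ? Hy|? ? ? ? a b Hx Hy Hab]; subst; auto.
    + inversion Hy as [| | | | | |? l s Hlen Hin| |]; subst.
      exists (Choice br1); split; [exact rho_u1 | split].
      * exists (Choice br1); split; [constructor; reflexivity |].
        exists [(l, s)]; split; [constructor; reflexivity |].
        intros l' s'' [E|[]]; inv E; auto.
      * apply wf_Choice_single; eauto.
    + inversion Hy as [| | | | |l s| | |]; subst; [| destruct (compat_tau Hab)].
      destruct (Hbr l s' (or_introl eq_refl)) as (s & Hin & HR).
      apply compat_AOutL_inv in Hab as ->.
      apply sound_rel_intro with s; [| auto | apply (Hwf l); left; auto].
      eapply compliant_step; [apply (compliant_choice_branch rho_u1 Hin) |].
      eapply sys_sync; [exact Hx | constructor | reflexivity].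
Qed.

End Server.

Lemma S_fun_mu s1 x s : S_fun leb R B s1 (Mu x s) -> S_fun leb R B s1 (subst x (Mu x s) s).
Proof.
  intros (u1 & Hu1 & Hm); exists u1; split; auto.
  destruct u1; try contradiction.
  1: apply unfold_mu_inv; exact Hm.
  1-4: destruct Hm as (c & d & Hu & Hm); exists c, d.
  5-6: destruct Hm as (c & Hu & Hm); exists c.
  all: split; [apply unfold_mu_inv; exact Hu | exact Hm].
Qed.

Lemma sound_rel_postfix rho s2 : sound_rel rho s2 -> postfix_at leb B sound_rel rho s2.
Proof.
  intros (s1 & Hc & HS & W).
  assert (left_tau : forall rho', step rho (Tau _ _) rho' -> sound_rel rho' s2).
  { intros rho' Hr; exists s1; split; auto.
    eapply compliant_step; [exact Hc | apply sys_left; exact Hr]. }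
  destruct (is_mu s2) eqn:Hmu.
  { destruct s2 as [| | | | | | |x s|]; try discriminate. split.
    - intros Hn; exfalso; apply Hn; do 2 eexists; apply sys_right; constructor.
    - intros r' s' Hst; inversion Hst as [? ? ? Hx|? ? ? Hy|? ? ? ? a b Hx Hy Hab]; subst; auto.
      + apply step_mu_inv in Hy as [_ ->]. exists s1; split; auto; split.
        * apply S_fun_mu; auto.
        * inv W; apply wf_subst; auto; constructor; auto.
      + apply step_mu_inv in Hy as [-> _]; destruct (compat_tau Hab). }
  destruct HS as (u1 & Hu1 & Hm).
  pose proof (compliant_unfold Hu1 Hc) as Hcu.
  destruct u1; simpl in Hm; try contradiction.
  1: apply unfold_id in Hm; auto; subst s2; apply sound_one with (One _ _); auto.
  1-4: destruct Hm as (x2 & s2' & Hu2 & HR & Hx); apply unfold_id in Hu2; auto; subst s2;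
    eapply sound_prefix; eauto using prefix;
    intros [] Ha; simpl in *; try contradiction; first [etransitivity; eassumption | eauto].
  all: destruct Hm as (br2 & Hu2 & Hbr); apply unfold_id in Hu2; auto; subst s2.
  - eapply sound_sum; eauto.
  - eapply sound_choice; eauto.
Qed.

End Soundness.

Lemma syn_sub_subcontract (BT L : Type) (leb : BT -> BT -> Prop)
  (B : term BT L -> term BT L -> Prop) :
  Transitive leb -> (forall a b c, B a b -> B b c -> B a c) ->
  forall s1 s2, wf s2 -> syn_sub leb B s1 s2 -> subcontract leb B s1 s2.
Proof.
  intros Hleb HB s1 s2 W [R [HR Hs]] r _ Hc.
  exists (sound_rel leb B R); split.
  - intros a b Hab; apply (sound_rel_postfix Hleb HB HR Hab).
  - exists s1; auto.
Qed.

(** * Dual contracts *)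

Section Dual.
Variables (BT L : Type).
Notation term := (term BT L).
Notation env := (nat -> option term).
Implicit Types (r s t u v w m : term) (br : list (L * term)) (rho : env).

Definition env_empty : env := fun _ => None.
Definition env_remove rho x : env := fun z => if Nat.eqb z x then None else rho z.
Definition env_update rho x w : env := fun z => if Nat.eqb z x then Some w else rho z.

Fixpoint env_subst rho t : term :=
  match t with
  | One _ _ => One _ _
  | InT b s => InT b (env_subst rho s)
  | OutT b s => OutT b (env_subst rho s)
  | OutM m s => OutM (env_subst rho m) (env_subst rho s)
  | InM m s => InM (env_subst rho m) (env_subst rho s)
  | Sum br => Sum (map_snd (env_subst rho) br)
  | Choice br => Choice (map_snd (env_subst rho) br)
  | Mu x s => Mu x (env_subst (env_remove rho x) s)
  | Var _ _ x => match rho x with Some w => w | None => Var _ _ x end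
  end.

(* Inside [Mu x s] the variable [x] of the dual refers to the dual recursion,
   whereas message types must keep referring to the original one: [rho] records,
   for every enclosing binder, the original recursive term to put back into messages. *)
Fixpoint dual_env rho t : term :=
  match t with
  | One _ _ => One _ _
  | InT b s => OutT b (dual_env rho s)
  | OutT b s => InT b (dual_env rho s)
  | OutM m s => InM (env_subst rho m) (dual_env rho s)
  | InM m s => OutM (env_subst rho m) (dual_env rho s)
  | Sum br => Choice (map_snd (dual_env rho) br)
  | Choice br => Sum (map_snd (dual_env rho) br)
  | Mu x s => Mu x (dual_env (env_update rho x (env_subst rho (Mu x s))) s)
  | Var _ _ x => Var _ _ x
  end.

Definition dual t : term := dual_env env_empty t.

Definition env_closed rho : Prop := forall y w, rho y = Some w -> closed w.
Definition env_SC rho : Prop := forall y w, rho y = Some w -> SC w.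
Definition env_covers rho t : Prop := forall z, occurs_free z t -> rho z <> None.

Lemma env_subst_ext t rho1 rho2 : (forall z, occurs_free z t -> rho1 z = rho2 z) ->
  env_subst rho1 t = env_subst rho2 t.
Proof.
  revert rho1 rho2.
  induction t as [| | | | |br IH|br IH|x t IHt|x] using term_ind_branches;
    simpl; intros rho1 rho2 E; f_equal; eauto using occurs_free.
  1-2: apply map_ext_in; intros [l s] Hin; simpl; f_equal; eauto using occurs_free.
  - apply IHt; intros z Hz; unfold env_remove.
    destruct (Nat.eqb_spec z x); [reflexivity | apply E; constructor; auto].
  - rewrite (E x); [reflexivity | constructor].
Qed.

Lemma dual_env_ext t rho1 rho2 : (forall z, occurs_free z t -> rho1 z = rho2 z) ->
  dual_env rho1 t = dual_env rho2 t.
Proof.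
  revert rho1 rho2.
  induction t as [| | | | |br IH|br IH|x t IHt|x] using term_ind_branches;
    simpl; intros rho1 rho2 E; f_equal; eauto using occurs_free, env_subst_ext.
  1-2: apply map_ext_in; intros [l s] Hin; simpl; f_equal; eauto using occurs_free.
  apply IHt; intros z Hz; unfold env_update.
  destruct (Nat.eqb_spec z x) as [->|]; [| apply E; constructor; auto].
  f_equal; apply (env_subst_ext (t := Mu x t)); auto.
Qed.

Lemma env_subst_empty t : env_subst env_empty t = t.
Proof.
  induction t as [| | | | |br IH|br IH|x t IHt|x] using term_ind_branches;
    simpl; f_equal; auto.
  1-2: rewrite <- (map_id br) at 2; apply map_ext_in; intros [l s] Hin; simpl; f_equal; eauto.
  rewrite <- IHt at 2; apply env_subst_ext; intros z _; unfold env_remove, env_empty.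
  destruct (Nat.eqb z x); auto.
Qed.

Lemma env_subst_closed rho t : closed t -> env_subst rho t = t.
Proof.
  intros C; rewrite <- (env_subst_empty t) at 2.
  apply env_subst_ext; intros z Hz; destruct (C z Hz).
Qed.

Lemma env_SC_closed rho : env_SC rho -> env_closed rho.
Proof. intros H y w E; apply (H y w E). Qed.

Lemma env_closed_remove rho x : env_closed rho -> env_closed (env_remove rho x).
Proof. intros H y w; unfold env_remove; destruct (Nat.eqb y x); eauto; discriminate. Qed.

Lemma env_closed_update rho x w : env_closed rho -> closed w -> env_closed (env_update rho x w).
Proof.
  intros H C y w'; unfold env_update; destruct (Nat.eqb y x); eauto.
  intros E; inv E; auto.
Qed.

Lemma env_SC_empty : env_SC env_empty.
Proof. discriminate. Qed.

Lemma env_SC_remove rho x : env_SC rho -> env_SC (env_remove rho x).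
Proof. intros H y w; unfold env_remove; destruct (Nat.eqb y x); eauto; discriminate. Qed.

Lemma env_SC_update rho x w : env_SC rho -> SC w -> env_SC (env_update rho x w).
Proof.
  intros H C y w'; unfold env_update; destruct (Nat.eqb y x); eauto.
  intros E; inv E; auto.
Qed.

Lemma occurs_free_env_subst z m rho : env_closed rho ->
  occurs_free z (env_subst rho m) -> occurs_free z m /\ rho z = None.
Proof.
  revert rho; induction m as [| | | | |br IH|br IH|x m IHm|x] using term_ind_branches;
    simpl; intros rho V Hz.
  all: try (inv Hz; match goal with
    | H : occurs_free _ (env_subst _ ?t),
      IH' : forall rho, _ -> occurs_free _ (env_subst rho ?t) -> _ |- _ =>
        destruct (IH' rho V H); split; eauto using occurs_free end; fail).
  1-2: inversion Hz as [| | | | | | |? l ? Hin Hs|? l ? Hin Hs|]; subst;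
    apply in_map_snd_inv in Hin as [s0 [Hin ->]];
    destruct (IH _ _ Hin rho V Hs); split; eauto using occurs_free.
  - inversion Hz as [| | | | | | | | |y s Hne Hs]; subst.
    apply IHm in Hs as [Hm Hrz]; [| apply env_closed_remove, V]; unfold env_remove in Hrz.
    destruct (Nat.eqb_spec z x); [congruence |]; split; auto; constructor; auto.
  - destruct (rho x) as [w|] eqn:E.
    + destruct (V x w E z Hz).
    + inv Hz; split; auto; constructor.
Qed.

Lemma unguarded_env_subst z m rho : env_closed rho ->
  unguarded z (env_subst rho m) -> unguarded z m.
Proof.
  revert rho; induction m; simpl; intros rho V H; try solve [inv H].
  - inv H; constructor; eauto using env_closed_remove.
  - destruct (rho n) as [w|] eqn:E; auto.
    destruct (V n w E z (unguarded_occurs_free H)).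
Qed.

Lemma subst_env_subst x v m rho : closed v ->
  env_subst rho (subst x v m) = env_subst (env_update rho x v) m.
Proof.
  intros C; revert rho.
  induction m as [| | | | |br IH|br IH|y m IHm|y] using term_ind_branches;
    simpl; intros rho; try (f_equal; auto; fail).
  1-2: f_equal; rewrite map_map; apply map_ext_in; intros [l s] Hin; simpl; f_equal; eauto.
  - destruct (Nat.eqb_spec x y) as [->|Hne]; simpl; f_equal; [| rewrite IHm];
      apply env_subst_ext; intros z _; unfold env_remove, env_update.
    + destruct (Nat.eqb z y); auto.
    + destruct (Nat.eqb_spec z y), (Nat.eqb_spec z x); subst; auto; congruence.
  - unfold env_update; destruct (Nat.eqb_spec x y) as [->|Hne]; simpl.
    + rewrite Nat.eqb_refl; apply env_subst_closed, C.
    + destruct (Nat.eqb_spec y x); [congruence | reflexivity].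
Qed.

Lemma subst_not_free x r t : ~ occurs_free x t -> subst x r t = t.
Proof.
  induction t as [| | | | |br IH|br IH|y t IHt|y] using term_ind_branches;
    simpl; intros Hx; try (f_equal; eauto 7 using occurs_free; fail).
  1-2: f_equal; rewrite <- (map_id br) at 2; apply map_ext_in; intros [l s] Hin; simpl;
    f_equal; eauto using occurs_free.
  - destruct (Nat.eqb_spec x y); f_equal; eauto using occurs_free.
  - destruct (Nat.eqb_spec x y) as [->|]; [destruct (Hx (of_var _ _ y)) | reflexivity].
Qed.

Lemma dual_env_subst x v t rho : closed v -> env_closed rho ->
  (forall z, occurs_free z t -> z = x \/ rho z <> None) ->
  dual_env rho (subst x v t) = subst x (dual v) (dual_env (env_update rho x v) t).
Proof.
  intros C; revert rho.
  induction t as [| | | | |br IH|br IH|y t IHt|y] using term_ind_branches;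
    simpl; intros rho V Cv.
  1: reflexivity.
  1-2: f_equal; apply IHt; auto; intros; apply Cv; constructor; auto.
  1-2: f_equal; [| apply IHt2; auto; intros; apply Cv; eauto using occurs_free];
    rewrite subst_env_subst, subst_not_free; auto;
    intros Hf; apply occurs_free_env_subst in Hf as [_ Hf]; [| apply env_closed_update; auto];
    unfold env_update in Hf; rewrite Nat.eqb_refl in Hf; discriminate.
  1-2: f_equal; rewrite !map_map; apply map_ext_in; intros [l s] Hin; simpl; f_equal;
    apply (IH l); auto; intros; apply Cv; eauto using occurs_free.
  - destruct (Nat.eqb_spec x y) as [->|Hne]; simpl.
    + f_equal; apply dual_env_ext; intros z _; unfold env_update.
      destruct (Nat.eqb_spec z y); auto. do 2 f_equal.
      apply env_subst_ext; intros z' _; unfold env_remove; destruct (Nat.eqb z' y); auto.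
    + destruct (Nat.eqb_spec x y); [congruence |]; f_equal.
      assert (Hcl : closed (env_subst rho (Mu y (subst x v t)))).
      { intros z Hz; apply occurs_free_env_subst in Hz as [Hz Hrz]; auto.
        inversion Hz as [| | | | | | | | |y' s Hzy Hs]; subst.
        apply occurs_free_subst in Hs as [Hs Hzx]; auto.
        destruct (Cv z) as [|]; auto; constructor; auto. }
      rewrite IHt; [| apply env_closed_update; auto |].
      * f_equal; apply dual_env_ext; intros z _; unfold env_update.
        destruct (Nat.eqb_spec z x), (Nat.eqb_spec z y); subst; try congruence.
        f_equal.
        change (env_subst rho (Mu y (subst x v t)) = env_subst (env_update rho x v) (Mu y t)).
        rewrite <- subst_env_subst; auto; simpl.
        destruct (Nat.eqb_spec x y); [congruence | reflexivity].
      * intros z Hz; unfold env_update; destruct (Nat.eqb_spec z y); [right; discriminate |].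
        apply Cv; constructor; auto.
  - destruct (Nat.eqb_spec x y) as [->|Hne]; simpl.
    + apply dual_env_ext; intros z Hz; destruct (C z Hz).
    + destruct (Nat.eqb_spec x y); [congruence | reflexivity].
Qed.

Lemma guarded_env_subst m rho : env_SC rho -> guarded m -> guarded (env_subst rho m).
Proof.
  revert rho; induction m as [| | | | |br IH|br IH|x m IHm|x] using term_ind_branches;
    simpl; intros rho HS G; inv G; try (constructor; eauto; fail).
  1-2: constructor; intros l s Hin; apply in_map_snd_inv in Hin as [s0 [Hin ->]]; eauto.
  - constructor; [| apply IHm; auto; apply env_SC_remove; auto].
    intros U; apply unguarded_env_subst in U; auto.
    apply env_closed_remove, env_SC_closed; auto.
  - destruct (rho x) as [w|] eqn:E; [apply (HS x w E) | constructor].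
Qed.

Lemma wf_env_subst m rho : env_SC rho -> wf m -> wf (env_subst rho m).
Proof.
  revert rho; induction m as [| | | | |br IH|br IH|x m IHm|x] using term_ind_branches;
    simpl; intros rho HS W; inv W; try (constructor; eauto; fail).
  1-2: constructor; [destruct br; simpl; congruence | rewrite map_fst_map_snd; auto |];
    intros l s Hin; apply in_map_snd_inv in Hin as [s0 [Hin ->]]; eauto.
  - constructor; apply IHm; auto; apply env_SC_remove; auto.
  - destruct (rho x) as [w|] eqn:E; [apply (HS x w E) | constructor].
Qed.

Lemma SC_env_subst rho t : env_SC rho -> env_covers rho t -> guarded t -> wf t ->
  SC (env_subst rho t).
Proof.
  intros HS Cv G W; split; [|split].
  - apply wf_env_subst; auto.
  - intros z Hz; apply occurs_free_env_subst in Hz as [Hz Hrz];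
      [exact (Cv z Hz Hrz) | apply env_SC_closed; auto].
  - apply guarded_env_subst; auto.
Qed.

Lemma env_SC_update_mu rho x t : env_SC rho -> env_covers rho (Mu x t) ->
  guarded (Mu x t) -> wf (Mu x t) ->
  env_SC (env_update rho x (env_subst rho (Mu x t))) /\
  env_covers (env_update rho x (env_subst rho (Mu x t))) t.
Proof.
  intros HS Cv G W; split.
  - apply env_SC_update; auto; apply SC_env_subst; auto.
  - intros z Hz; unfold env_update; destruct (Nat.eqb_spec z x); [discriminate |].
    apply Cv; constructor; auto.
Qed.

Lemma occurs_free_dual_env z t rho : env_SC rho -> env_covers rho t -> guarded t -> wf t ->
  occurs_free z (dual_env rho t) -> occurs_free z t.
Proof.
  revert rho; induction t as [| | | | |br IH|br IH|x t IHt|x] using term_ind_branches;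
    simpl; intros rho HS Cv G W Hz; [inv Hz | .. | exact Hz];
    inversion G; inversion W; subst.
  1-2: inv Hz; constructor; eapply IHt; eauto; intros y Hy; apply Cv; constructor; auto.
  1-2: inversion Hz as [| | | m' s' Hm | m' s' Hs | m' s' Hm | m' s' Hs | | |]; subst;
    [ exfalso; apply occurs_free_env_subst in Hm as [Hm Hrz]; [| apply env_SC_closed; auto];
      apply (Cv z); eauto using occurs_free
    | constructor; eapply IHt2; eauto; intros y Hy; apply Cv; eauto using occurs_free ].
  1-2: inversion Hz as [| | | | | | |br' l s Hin Hs|br' l s Hin Hs|]; subst;
    apply in_map_snd_inv in Hin as [s0 [Hin ->]]; econstructor; [exact Hin |];
    eapply IH; eauto; intros y Hy; apply Cv; eauto using occurs_free.
  inversion Hz as [| | | | | | | | |y s Hne Hs]; subst.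
  destruct (env_SC_update_mu HS Cv G W); constructor; eauto.
Qed.

Lemma unguarded_dual_env z t rho : unguarded z (dual_env rho t) -> unguarded z t.
Proof. revert rho; induction t; simpl; intros rho H; inv H; constructor; eauto. Qed.

Lemma guarded_wf_dual_env t rho : env_SC rho -> env_covers rho t -> guarded t -> wf t ->
  guarded (dual_env rho t) /\ wf (dual_env rho t).
Proof.
  revert rho; induction t as [| | | | |br IH|br IH|x t IHt|x] using term_ind_branches;
    simpl; intros rho HS Cv G W; inversion G; inversion W; subst; try (split; constructor; fail).
  1-2: destruct (IHt rho); auto;
    [intros y Hy; apply Cv; constructor; auto | split; constructor; auto].
  1-2: destruct (IHt2 rho); auto; [intros y Hy; apply Cv; eauto using occurs_free |];
    split; constructor; auto; [apply guarded_env_subst | apply wf_env_subst]; auto.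
  1-2: split; constructor;
    try (destruct br; simpl; congruence); try (rewrite map_fst_map_snd; auto);
    intros l s Hin; apply in_map_snd_inv in Hin as [s0 [Hin ->]];
    (eapply IH; eauto; intros y Hy; apply Cv; eauto using occurs_free).
  destruct (env_SC_update_mu HS Cv G W) as [HS' Cv'].
  destruct (IHt _ HS' Cv'); auto.
  split; constructor; auto; intros U; apply unguarded_dual_env in U; auto.
Qed.

Lemma SC_dual t : SC t -> SC (dual t).
Proof.
  intros (W & C & G).
  assert (Cv : env_covers env_empty t) by (intros z Hz; destruct (C z Hz)).
  destruct (guarded_wf_dual_env env_SC_empty Cv G W); split; [|split]; auto.
  intros z Hz; apply (C z); eapply occurs_free_dual_env; eauto using env_SC_empty.
Qed.

Lemma dual_mu x s : dual (Mu x s) = Mu x (dual_env (env_update env_empty x (Mu x s)) s).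
Proof. unfold dual; cbn [dual_env]; rewrite env_subst_empty; reflexivity. Qed.

Lemma unfold_dual t u : unfold t u -> SC t -> unfold (dual t) (dual u).
Proof.
  induction 1 as [x s u Hu IH|s Hs]; intros HS.
  - rewrite dual_mu; constructor.
    replace (subst x (Mu x _) _) with (dual (subst x (Mu x s) s)).
    + apply IH, SC_subst_mu, HS.
    + destruct HS as (_ & C & _); rewrite <- dual_mu; unfold dual at 1.
      rewrite dual_env_subst; auto.
      * intros y w; discriminate.
      * intros z Hz; left; destruct (Nat.eqb_spec z x); auto.
        exfalso; apply (C z); constructor; auto.
  - constructor; destruct s; simpl in *; auto.
Qed.

End Dual.

Arguments dual {BT L} t.

Section DualCompliance.
Variables (BT L : Type) (leb : BT -> BT -> Prop) (B : term BT L -> term BT L -> Prop).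
Hypothesis leb_refl : Reflexive leb.
Hypothesis B_refl : forall m, SC m -> B m m.
Notation term := (term BT L).
Implicit Types (r s u : term) (br : list (L * term)).
Notation comp := (compliant leb B).
Notation st := (sys_tau leb B).

Lemma dual_prefix u a s : prefix u a s -> dual u = co_prefix a (dual s).
Proof. intros []; unfold dual; simpl; rewrite ?env_subst_empty; reflexivity. Qed.

Lemma dual_is_mu u : is_mu (dual u) = is_mu u.
Proof. destruct u; reflexivity. Qed.

(* Besides [dual u] against [u] up to unfolding, the states in which an internal choice
   (of the dual or of the original) has committed to one branch. *)
Definition dual_rel a b : Prop :=
  (exists u, SC u /\ unfold a (dual u) /\ unfold b u) \/
  (exists br l s, SC (Sum br) /\ In (l, s) br /\
     a = Choice [(l, dual s)] /\ unfold b (Sum br)) \/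
  (exists br l s, SC (Choice br) /\ In (l, s) br /\
     unfold a (dual (Choice br)) /\ b = Choice [(l, s)]).

Lemma dual_rel_intro s : SC s -> dual_rel (dual s) s.
Proof.
  intros Hs; left; destruct (unfold_exists Hs) as [u Hu].
  exists u; split; [|split]; eauto using unfold_SC, unfold_dual.
Qed.

Lemma dual_prefix_sync u a s : SC u -> prefix u a s ->
  step (dual u) (co_act a) (dual s) /\ compat leb B (co_act a) a.
Proof.
  intros Su Hp; rewrite (dual_prefix Hp); split.
  - apply prefix_step; eapply prefix_co_prefix; eauto.
  - eapply compat_co_act; eauto.
Qed.

Lemma dual_stuck u : SC u -> is_mu u = false -> ~ (exists a' b', st (dual u) u a' b') ->
  (exists r', step (dual u) (Tick _ _) r') /\ (exists s', step u (Tick _ _) s').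
Proof.
  intros Su Hu Hn.
  assert (Hsync : forall a a' b b', step (dual u) a a' -> step u b b' -> compat leb B a b -> False)
    by (intros; apply Hn; do 2 eexists; eapply sys_sync; eauto).
  destruct u as [|t s|t s|m s|m s|br|br| |x]; try discriminate.
  1: split; eexists; constructor.
  1-4: exfalso; edestruct dual_prefix_sync as [Hd Hc]; [exact Su | constructor |];
    eapply Hsync; [exact Hd | constructor | exact Hc].
  - destruct br as [|[l s] [|q br]]; [destruct (wf_Sum_inv (proj1 Su)) as [[] _]; auto | |].
    + exfalso; eapply Hsync; [constructor | constructor; left; reflexivity | reflexivity].
    + exfalso; apply Hn; do 2 eexists; apply sys_left.
      apply st_choice with (l := l) (s := dual s); simpl; auto; lia.
  - destruct br as [|[l s] [|q br]]; [destruct (wf_Choice_inv (proj1 Su)) as [[] _]; auto | |].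
    + exfalso; eapply Hsync; [constructor; left; reflexivity | constructor | reflexivity].
    + exfalso; apply Hn; do 2 eexists; apply sys_right.
      apply st_choice with (l := l) (s := s); simpl; auto; lia.
  - destruct (SC_Var Su).
Qed.

Lemma dual_sync u a a' b b' : SC u -> step (dual u) a a' -> step u b b' ->
  compat leb B a b -> a' = dual b'.
Proof.
  intros Su Ha Hb Hab.
  destruct (classic (exists c s, prefix u c s)) as [(c & s & Hp)|Hnp].
  { rewrite (dual_prefix Hp) in Ha.
    destruct (prefix_step_inv (prefix_co_prefix _ Hp) Ha) as [_ ->].
    destruct (prefix_step_inv Hp Hb) as [_ ->]; reflexivity. }
  destruct u as [|t s|t s|m s|m s|br|br|x s|x];
    try solve [exfalso; apply Hnp; eauto using prefix].
  - inv Hb; destruct a; contradiction.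
  - inversion Hb as [| | | | | | |? l ? Hin|]; subst.
    apply compat_AInL_inv in Hab as ->; apply step_AOutL_inv in Ha.
    destruct br as [|[l0 s0] [|q br]]; inv Ha.
    destruct Hin as [E|[]]; inv E; reflexivity.
  - inversion Hb as [| | | | |l s| | |]; subst; [| destruct (compat_tau Hab)].
    apply compat_AOutL_inv in Hab as ->.
    inversion Ha as [| | | | | | |? l' ? Hin|]; subst.
    destruct Hin as [E|[]]; inv E; reflexivity.
  - apply step_mu_inv in Hb as [-> _]; destruct (compat_tau Hab).
  - destruct (SC_Var Su).
Qed.

Lemma dual_rel_postfix_unfold a b u : SC u -> unfold a (dual u) -> unfold b u ->
  postfix_at leb B dual_rel a b.
Proof.
  intros Su Ha Hb; pose proof (unfold_not_mu Hb) as Hu.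
  split.
  - intros Hn.
    destruct (is_mu a) eqn:Ea;
      [destruct a; try discriminate; destruct (stuck_stable_l Hn (st_mu _ _)) |].
    destruct (is_mu b) eqn:Eb;
      [destruct b; try discriminate; destruct (stuck_stable_r Hn (st_mu _ _)) |].
    apply unfold_id in Ha; [subst a | exact Ea]; apply unfold_id in Hb; [subst b | exact Eb].
    apply dual_stuck; auto.
  - intros a' b' Hst; inversion Hst as [? ? ? Hx|? ? ? Hy|? ? ? ? c d Hx Hy Hcd]; subst.
    + destruct (is_mu a) eqn:Ea.
      { destruct a; try discriminate; apply step_mu_inv in Hx as [_ ->].
        left; exists u; auto using unfold_mu_inv. }
      apply unfold_id in Ha; [subst a | exact Ea].
      destruct (step_tau_inv Hx) as (br' & l & s' & Hd & _ & Hin & ->);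
        [rewrite dual_is_mu; auto |].
      destruct u; inv Hd; apply in_map_snd_inv in Hin as [s [Hin ->]].
      right; left; exists l0, l, s; auto.
    + destruct (is_mu b) eqn:Eb.
      { destruct b; try discriminate; apply step_mu_inv in Hy as [_ ->].
        left; exists u; auto using unfold_mu_inv. }
      apply unfold_id in Hb; [subst b | exact Eb].
      destruct (step_tau_inv Hy Hu) as (br & l & s & -> & _ & Hin & ->).
      right; right; exists br, l, s; auto.
    + destruct (is_mu a) eqn:Ea;
        [destruct a; try discriminate; apply step_mu_inv in Hx as [-> _];
         destruct (compat_tau_l Hcd) |].
      destruct (is_mu b) eqn:Eb;
        [destruct b; try discriminate; apply step_mu_inv in Hy as [-> _];
         destruct (compat_tau Hcd) |].
      apply unfold_id in Ha; [subst a | exact Ea]; apply unfold_id in Hb; [subst b | exact Eb].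
      rewrite (dual_sync Su Hx Hy Hcd); apply dual_rel_intro, (SC_step Su Hy).
Qed.

Lemma dual_rel_postfix_sum br l s b : SC (Sum br) -> In (l, s) br -> unfold b (Sum br) ->
  postfix_at leb B dual_rel (Choice [(l, dual s)]) b.
Proof.
  intros Su Hin Hb; split.
  - intros Hn; exfalso.
    destruct (is_mu b) eqn:Eb;
      [destruct b; try discriminate; destruct (stuck_stable_r Hn (st_mu _ _)) |].
    apply unfold_id in Hb; [subst b | exact Eb].
    apply Hn; do 2 eexists; eapply sys_sync; [constructor | constructor; eauto | reflexivity].
  - intros a' b' Hst; inversion Hst as [? ? ? Hx|? ? ? Hy|? ? ? ? c d Hx Hy Hcd]; subst.
    + destruct (stable_choice_single Hx).
    + destruct (is_mu b) eqn:Eb.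
      * destruct b; try discriminate; apply step_mu_inv in Hy as [_ ->].
        right; left; exists br, l, s; auto using unfold_mu_inv.
      * apply unfold_id in Hb; [subst b | exact Eb]; destruct (stable_sum Hy).
    + destruct (is_mu b) eqn:Eb;
        [destruct b; try discriminate; apply step_mu_inv in Hy as [-> _];
         destruct (compat_tau Hcd) |].
      apply unfold_id in Hb; [subst b | exact Eb].
      apply step_choice_single_inv in Hx as [-> ->].
      inversion Hy as [| | | | | | |? l' ? Hin'|]; subst; simpl in Hcd; subst.
      destruct (wf_Sum_inv (proj1 Su)) as (_ & Hnd & _).
      rewrite (NoDup_map_fst_In_eq Hnd Hin' Hin).
      apply dual_rel_intro, (SC_Sum_branch Su Hin).
Qed.

Lemma dual_rel_postfix_choice br l s a : SC (Choice br) -> In (l, s) br ->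
  unfold a (dual (Choice br)) -> postfix_at leb B dual_rel a (Choice [(l, s)]).
Proof.
  intros Su Hin Ha; split.
  - intros Hn; exfalso.
    destruct (is_mu a) eqn:Ea;
      [destruct a; try discriminate; destruct (stuck_stable_l Hn (st_mu _ _)) |].
    apply unfold_id in Ha; [subst a | exact Ea].
    apply Hn; do 2 eexists; eapply sys_sync;
      [apply st_sum, in_map_snd, Hin | constructor | reflexivity].
  - intros a' b' Hst; inversion Hst as [? ? ? Hx|? ? ? Hy|? ? ? ? c d Hx Hy Hcd]; subst.
    + destruct (is_mu a) eqn:Ea.
      * destruct a; try discriminate; apply step_mu_inv in Hx as [_ ->].
        right; right; exists br, l, s; auto using unfold_mu_inv.
      * apply unfold_id in Ha; [subst a | exact Ea]; destruct (stable_sum Hx).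
    + destruct (stable_choice_single Hy).
    + destruct (is_mu a) eqn:Ea;
        [destruct a; try discriminate; apply step_mu_inv in Hx as [-> _];
         destruct (compat_tau_l Hcd) |].
      apply unfold_id in Ha; [subst a | exact Ea].
      apply step_choice_single_inv in Hy as [-> ->].
      inversion Hx as [| | | | | | |? l' ? Hin'|]; subst; simpl in Hcd; subst.
      apply in_map_snd_inv in Hin' as [s' [Hin' ->]].
      destruct (wf_Choice_inv (proj1 Su)) as (_ & Hnd & _).
      rewrite (NoDup_map_fst_In_eq Hnd Hin' Hin).
      apply dual_rel_intro, (SC_Choice_branch Su Hin).
Qed.

Lemma dual_compliant s : SC s -> comp (dual s) s.
Proof.
  intros Hs; exists dual_rel; split; [| apply dual_rel_intro, Hs].
  intros a b [(u & Su & Ha & Hb)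
             |[(br & l & s' & Su & Hin & -> & Hb)|(br & l & s' & Su & Hin & Ha & ->)]].
  - apply (dual_rel_postfix_unfold Su Ha Hb).
  - apply (dual_rel_postfix_sum Su Hin Hb).
  - apply (dual_rel_postfix_choice Su Hin Ha).
Qed.

Lemma sum_client_with_branch br lk s r : SC (Choice br) -> In (lk, s) br -> SC r -> comp r s ->
  exists brc, In (lk, r) brc /\ SC (Sum brc) /\ comp (Sum brc) (Choice br).
Proof.
  intros Sbr Hin Sr Hr.
  destruct (wf_Choice_inv (proj1 Sbr)) as (_ & Hnd & _).
  destruct (in_split _ _ Hin) as (l1 & l2 & ->).
  set (brc := map_snd dual l1 ++ (lk, r) :: map_snd dual l2).
  assert (Hbrc : forall l x, In (l, x) brc ->
            (l = lk /\ x = r) \/ exists x0, In (l, x0) (l1 ++ (lk, s) :: l2) /\ x = dual x0).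
  { intros l x H; apply in_app_iff in H as [H|[E|H]];
      [| inv E; auto | ]; apply in_map_snd_inv in H as [x0 [H ->]]; right; exists x0;
      split; auto; apply in_app_iff; simpl; auto. }
  exists brc; split; [|split].
  - apply in_app_iff; right; left; reflexivity.
  - apply SC_Sum_intro.
    + destruct l1; discriminate.
    + unfold brc; rewrite map_app; simpl; rewrite !map_fst_map_snd.
      rewrite map_app in Hnd; exact Hnd.
    + intros l x H; destruct (Hbrc l x H) as [[_ ->]|(x0 & H0 & ->)]; auto.
      apply SC_dual, (SC_Choice_branch Sbr H0).
  - apply compliant_sum_choice.
    + destruct l1; discriminate.
    + intros l y H; apply in_app_iff in H as [H|[E|H]].
      * exists (dual y); apply in_app_iff; left; apply in_map_snd, H.
      * inv E; exists r; apply in_app_iff; right; left; reflexivity.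
      * exists (dual y); apply in_app_iff; right; right; apply in_map_snd, H.
    + intros l x y Hx Hy; destruct (Hbrc l x Hx) as [[-> ->]|(x0 & H0 & ->)].
      * rewrite (NoDup_map_fst_In_eq Hnd Hy Hin); exact Hr.
      * rewrite (NoDup_map_fst_In_eq Hnd H0 Hy).
        apply dual_compliant, (SC_Choice_branch Sbr Hy).
Qed.

End DualCompliance.

(** * Completeness *)

Section Completeness.
Variables (BT L : Type) (leb : BT -> BT -> Prop) (B : term BT L -> term BT L -> Prop).
Hypothesis leb_refl : Reflexive leb.
Hypothesis B_refl : forall m, SC m -> B m m.
Notation term := (term BT L).
Implicit Types (r s u : term) (br : list (L * term)).
Notation comp := (compliant leb B).

Definition complete_rel s1 s2 : Prop := SC s1 /\ SC s2 /\ subcontract leb B s1 s2.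

Lemma compliant_client_sync r u : comp r u -> is_mu u = false -> stable r ->
  (forall r', ~ step r (Tick _ _) r') \/ (forall u', ~ step u (Tick _ _) u') ->
  (forall l r', ~ step r (AInL _ l) r') ->
  exists a r' b u', step r a r' /\ step u b u' /\ compat leb B a b.
Proof.
  intros Hc Hu Hr Htick Hin.
  destruct (classic (stable u)) as [Hs|Hs]; [apply compliant_sync; auto |].
  exfalso; apply Hs; intros u' Hu'.
  destruct (step_tau_inv Hu' Hu) as (br & l & s & -> & _ & Hl & ->).
  destruct (compliant_sync (compliant_choice_branch Hc Hl))
    as (a & r' & b & s' & Hra & Hsb & Hab); auto using stable_choice_single.
  { right; intros ? Hx; apply step_choice_single_inv in Hx as [Hx _]; discriminate. }
  apply step_choice_single_inv in Hsb as [-> ->].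
  apply compat_AOutL_inv in Hab as ->; destruct (Hin _ _ Hra).
Qed.

Lemma compliant_One_inv u : comp (One _ _) u -> is_mu u = false -> u = One _ _.
Proof.
  intros Hc Hu.
  destruct (classic (exists u', step u (Tick _ _) u')) as [[u' Hu']|Htick];
    [inv Hu'; reflexivity |].
  destruct (compliant_client_sync Hc Hu) as (a & r' & b & u' & Hr & _ & Hab).
  - intros r' Hr; inv Hr.
  - right; intros u' Hu'; eauto.
  - intros l r' Hr; inv Hr.
  - inv Hr; destruct b; contradiction.
Qed.

Lemma subcontract_unfold s1 s2 u1 u2 : subcontract leb B s1 s2 ->
  unfold s1 u1 -> unfold s2 u2 -> forall r, SC r -> comp r u1 -> comp r u2.
Proof.
  intros Hs Hu1 Hu2 r Sr Hc; eapply compliant_unfold; eauto.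
  apply Hs; auto; eapply compliant_unfold_back; eauto.
Qed.

Section Unfolded.
Variables (s1 s2 u1 u2 : term).
Hypothesis s1_s2 : complete_rel s1 s2.
Hypothesis s1_u1 : unfold s1 u1.
Hypothesis s2_u2 : unfold s2 u2.

Let SC_u1 : SC u1 := unfold_SC s1_u1 (proj1 s1_s2).
Let SC_u2 : SC u2 := unfold_SC s2_u2 (proj1 (proj2 s1_s2)).
Let u1_u2 : forall r, SC r -> comp r u1 -> comp r u2 :=
  subcontract_unfold (proj2 (proj2 s1_s2)) s1_u1 s2_u2.
Let u2_not_mu : is_mu u2 = false := unfold_not_mu s2_u2.

Lemma complete_one : u1 = One _ _ -> u2 = One _ _.
Proof.
  intros ->; apply compliant_One_inv; auto.
  apply u1_u2; [apply SC_One | apply (dual_compliant leb_refl B_refl (SC_One _ _))].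
Qed.

Lemma complete_prefix a s1' : prefix u1 a s1' ->
  exists b s2', prefix u2 b s2' /\ compat leb B (co_act a) b /\ complete_rel s1' s2'.
Proof.
  intros Hp.
  assert (SC_s1' : SC s1') by exact (SC_step SC_u1 (prefix_step Hp)).
  assert (client : forall r, SC r -> comp r s1' -> comp (co_prefix a r) u2).
  { intros r Sr Hr; apply u1_u2; [exact (SC_co_prefix SC_u1 Hp Sr) |].
    eapply compliant_prefix; [apply (prefix_co_prefix r Hp) | exact Hp | | exact Hr].
    exact (compat_co_act leb_refl B_refl SC_u1 Hp). }
  pose proof (prefix_co_prefix (dual s1') Hp) as Hq.
  pose proof (client _ (SC_dual SC_s1') (dual_compliant leb_refl B_refl SC_s1')) as Hc.
  destruct (compliant_client_sync Hc u2_not_mu)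
    as (c & r' & b & s2' & Hr & Hs & Hcb);
    eauto using prefix_stable, prefix_no_tick.
  { intros l r' Hr; destruct (prefix_step_inv Hq Hr) as [Hl _]; inv Hp; discriminate. }
  destruct (prefix_step_inv Hq Hr) as [-> ->].
  pose proof (compat_prefix_step_r Hq Hcb Hs) as Hp2.
  exists b, s2'; split; [|split]; auto; split; [|split]; auto.
  - exact (SC_step SC_u2 Hs).
  - intros r Sr Hr'.
    apply (compliant_prefix_inv (client r Sr Hr') (prefix_co_prefix r Hp) Hp2).
Qed.

Lemma complete_sum_branch br1 l s : u1 = Sum br1 -> In (l, s) br1 ->
  exists br2 s', u2 = Sum br2 /\ In (l, s') br2 /\ complete_rel s s'.
Proof.
  intros -> Hin.
  assert (SC_s : SC s) by exact (SC_Sum_branch SC_u1 Hin).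
  destruct (wf_Sum_inv (proj1 SC_u1)) as (_ & Hnd & _).
  assert (client : forall r, SC r -> comp r s -> comp (Choice [(l, r)]) u2).
  { intros r Sr Hr; apply u1_u2; [apply SC_Choice_single, Sr |].
    apply compliant_single_sum; [eauto |].
    intros s0 H0; rewrite (NoDup_map_fst_In_eq Hnd H0 Hin); exact Hr. }
  destruct (compliant_client_sync (client _ (SC_dual SC_s) (dual_compliant leb_refl B_refl SC_s)))
    as (a & r' & b & s' & Hr & Hs & Hab); auto using stable_choice_single.
  { left; intros ? Hx; apply step_choice_single_inv in Hx as [Hx _]; discriminate. }
  { intros ? ? Hx; apply step_choice_single_inv in Hx as [Hx _]; discriminate. }
  apply step_choice_single_inv in Hr as [-> ->].
  destruct b; simpl in Hab; try contradiction; subst.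
  destruct (step_AInL_inv Hs) as (br2 & -> & Hin2).
  exists br2, s'; split; [|split]; auto; split; [|split]; auto.
  - exact (SC_step SC_u2 Hs).
  - intros r Sr Hr'; eapply compliant_step; [exact (client r Sr Hr') |].
    eapply sys_sync; [constructor | exact Hs | reflexivity].
Qed.

Lemma complete_sum br1 : u1 = Sum br1 ->
  exists br2, u2 = Sum br2 /\
    forall l s, In (l, s) br1 -> exists s', In (l, s') br2 /\ complete_rel s s'.
Proof.
  intros Hu1.
  destruct br1 as [|[l0 s0] br1];
    [subst u1; destruct (wf_Sum_inv (proj1 SC_u1)) as [[] _]; reflexivity |].
  destruct (complete_sum_branch Hu1 (or_introl eq_refl)) as (br2 & _ & E2 & _).
  exists br2; split; auto; intros l s Hin.
  destruct (complete_sum_branch Hu1 Hin) as (br2' & s' & E & Hin' & Hs).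
  rewrite E2 in E; inv E; eauto.
Qed.

Lemma complete_choice br1 : u1 = Choice br1 ->
  exists br2, u2 = Choice br2 /\
    forall l s', In (l, s') br2 -> exists s, In (l, s) br1 /\ complete_rel s s'.
Proof.
  intros Hu1.
  pose proof (u1_u2 (SC_dual SC_u1) (dual_compliant leb_refl B_refl SC_u1)) as Hd.
  subst u1; change (dual (Choice br1)) with (Sum (map_snd dual br1)) in Hd.
  assert (no_tick : forall br x, ~ step (Sum br) (Tick _ _) x) by (intros ? ? Hx; inv Hx).
  assert (Hbr2 : exists br2, u2 = Choice br2).
  { apply NNPP; intros Hn.
    destruct (compliant_sync Hd) as (a & r' & b & s' & Hr & Hs & Hab); auto using stable_sum.
    - intros u' Hu'; destruct (step_tau_inv Hu' u2_not_mu) as (br & _ & _ & -> & _); eauto.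
    - inversion Hr as [| | | | | | |? l ? Hin|]; subst.
      destruct b; simpl in Hab; try contradiction; subst.
      apply step_AOutL_inv in Hs; eauto. }
  destruct Hbr2 as [br2 ->]; exists br2; split; auto; intros l s' Hin'.
  pose proof (compliant_choice_branch Hd Hin') as Hd1.
  destruct (compliant_sync Hd1) as (a & x & b & y & Hx & Hy & Hab);
    auto using stable_sum, stable_choice_single.
  apply step_choice_single_inv in Hy as [-> ->].
  apply compat_AOutL_inv in Hab as ->.
  inversion Hx as [| | | | | | |? ? ? Hin|]; subst.
  apply in_map_snd_inv in Hin as [s [Hin ->]].
  exists s; split; auto; split; [|split].
  - exact (SC_Choice_branch SC_u1 Hin).
  - exact (SC_Choice_branch SC_u2 Hin').
  - intros r Sr Hr.
    destruct (sum_client_with_branch leb_refl B_refl SC_u1 Hin Sr Hr) as (brc & Hr' & Sc & Hc).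
    eapply compliant_step; [exact (compliant_choice_branch (u1_u2 Sc Hc) Hin') |].
    eapply sys_sync; [constructor; exact Hr' | constructor | reflexivity].
Qed.

End Unfolded.

Lemma complete_rel_S s1 s2 : complete_rel s1 s2 -> S_fun leb complete_rel B s1 s2.
Proof.
  intros Hrel.
  destruct (unfold_exists (proj1 Hrel)) as [u1 Hu1].
  destruct (unfold_exists (proj1 (proj2 Hrel))) as [u2 Hu2].
  exists u1; split; auto.
  destruct (classic (exists a s1', prefix u1 a s1')) as [(a & s1' & Hp)|Hnp].
  { destruct (complete_prefix Hrel Hu1 Hu2 Hp) as (b & s2' & Hp2 & Hab & Hs).
    (* [compat (co_act a) b] fixes the kind of [b] and is the side condition of [S_fun]. *)
    inv Hp; inv Hp2; simpl in Hab; try contradiction; eauto 7. }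
  destruct u1 as [| | | | |br1|br1| |x]; try solve [exfalso; apply Hnp; eauto using prefix].
  - rewrite <- (complete_one Hrel Hu1 Hu2 eq_refl); exact Hu2.
  - destruct (complete_sum Hrel Hu1 Hu2 eq_refl) as (br2 & -> & Hbr); eauto.
  - destruct (complete_choice Hrel Hu1 Hu2 eq_refl) as (br2 & -> & Hbr); eauto.
  - discriminate (unfold_not_mu Hu1).
  - destruct (SC_Var (unfold_SC Hu1 (proj1 Hrel))).
Qed.

End Completeness.

Theorem mainTheorem6 (BT L : Type) (leb : BT -> BT -> Prop)
  (Hleb : PreOrder leb)
  (B : term BT L -> term BT L -> Prop) (HB : preorder_on_SC B)
  (s1 s2 : term BT L) (H1 : SC s1) (H2 : SC s2) :
  syn_sub leb B s1 s2 <-> subcontract leb B s1 s2.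
Proof.
  destruct HB as (_ & B_refl & B_trans); split.
  - apply syn_sub_subcontract; [apply Hleb | exact B_trans | exact (proj1 H2)].
  - intros Hsub; exists (complete_rel leb B); split.
    + apply complete_rel_S; [apply Hleb | exact B_refl].
    + split; [|split]; assumption.
Qed.
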